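(* Let $T=((\Omega,\mathcal{A}),\{(\Omega,\mathcal{M}_i)\}_{i\in N},\{t_i\}_{i\in N})$ be a type space. Then exactly one of the following holds: (a) the players' beliefs in $T$ are consistent; (b) $T$ admits a money pump.
   Context: A field on a set $X$ is a collection of subsets of $X$ containing $X$ and closed under complements and finite intersections. For a field $\mathcal{A}$ on $\Omega$, $\mathrm{pba}(\Omega,\mathcal{A})$ is the set of finitely additive nonnegative $P:\mathcal{A}\to\mathbb{R}$ with $P(\Omega)=1$; $\mathrm{ba}(\Omega,\mathcal{A})$ is the space of bounded finitely additive real set functions on $\mathcal{A}$; $B(\Omega,\mathcal{A})$ is the sup-norm closure of the linear span of indicators of sets in $\mathcal{A}$ (these functions are integrable against every element of $\mathrm{ba}(\Omega,\mathcal{A})$). $\mathrm{ba}(\Omega,\mathcal{A})$ carries the weak* topology, the weakest topology making $\mu\mapsto\int f\,d\mu$ continuous for all $f\in B(\Omega,\mathcal{A})$; $\overline{\,\cdot\,}^\ast$ denotes weak* closure. A type space is $T=((\Omega,\mathcal{A}),\{(\Omega,\mathcal{M}_i)\}_{i\in N},\{t_i\}_{i\in N})$ with $N$ a nonempty set of players, $\Omega$ a set, $\mathcal{A}$ and $\mathcal{M}_i\subseteq\mathcal{A}$ fields on $\Omega$, and $t_i:\Omega\times\mathcal{A}\to[0,1]$ with: $t_i(\omega,\cdot)\in\mathrm{pba}(\Omega,\mathcal{A})$ for all $\omega$; $t_i(\cdot,E)\in B(\Omega,\mathcal{M}_i)$ for all $E\in\mathcal{A}$; $t_i(\omega,E)=1$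 whenever $E\in\mathcal{M}_i$, $\omega\in E$. For $i\in N$ let $\Pi_i=\overline{\mathrm{conv}\{t_i(\omega,\cdot):\omega\in\Omega\}}^\ast$ (equivalently, the set of $P\in\mathrm{pba}(\Omega,\mathcal{A})$ with $P(E\cap F)=\int_F t_i(\cdot,E)\,dP$ for all $E\in\mathcal{A}$, $F\in\mathcal{M}_i$). The players' beliefs are consistent if $\bigcap_{i\in I}\Pi_i\neq\emptyset$ for every finite $I\subseteq N$. For $I\subseteq N$, a nonempty $S\subseteq\Omega$ (not necessarily in $\mathcal{A}$) is an $I$-common certainty component if there is $E\in\mathcal{A}$ with $E\subseteq S$ and $t_i(\omega,E)=1$ for all $\omega\in S$, $i\in I$. A set $E\subseteq\Omega$ is $I$-commonly certain at $\omega$ if there is an $I$-common certainty component $S$ with $\omega\in S\subseteq E$. A semi-bet is a family $(f_i)_{i\in I}\subseteq B(\Omega,\mathcal{A})$ with $I\subseteq N$ finite such that for every $\omega\in\Omega$ the set $\{\omega'\in\Omega:\int f_i\,dt_i(\omega',\cdot)\ge0\ \forall i\in I\}$ is $I$-commonly certain at $\omega$. $T$ admits a money pump if for every $P\in\mathrm{pba}(\Omega,\mathcal{A})$ there is a semi-bet $(f_i)_{i\in I}$ with $\int\sum_{i\in I}f_i\,dP<0$. *)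

From Stdlib Require Import Reals List ClassicalDescription ClassicalEpsilon.
Import ListNotations.
Open Scope R_scope.

Section TypeSpaces.

Context {Omega : Type}.

Definition set := Omega -> Prop.
Definition setT : set := fun _ => True.
Definition setC (E : set) : set := fun w => ~ E w.
Definition setI (E F : set) : set := fun w => E w /\ F w.
Definition setU (E F : set) : set := fun w => E w \/ F w.

Definition is_field (F : set -> Prop) : Prop :=
  F setT /\ (forall E, F E -> F (setC E)) /\
  (forall E G, F E -> F G -> F (setI E G)).

Definition fin_additive (A : set -> Prop) (mu : set -> R) : Prop :=
  forall E F, A E -> A F -> (forall w, ~ (E w /\ F w)) ->
    mu (setU E F) = mu E + mu F.

Definition ba (A : set -> Prop) (mu : set -> R) : Prop :=
  fin_additive A mu /\ exists K, forall E, A E -> Rabs (mu E) <= K.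

Definition pba (A : set -> Prop) (P : set -> R) : Prop :=
  fin_additive A P /\ (forall E, A E -> 0 <= P E) /\ P setT = 1.

Definition indicator (E : set) (w : Omega) : R :=
  if excluded_middle_informative (E w) then 1 else 0.

Definition simple_eval (l : list (R * set)) (w : Omega) : R :=
  fold_right (fun p acc => fst p * indicator (snd p) w + acc) 0 l.

Definition simple_in (A : set -> Prop) (l : list (R * set)) : Prop :=
  Forall (fun p => A (snd p)) l.

Definition simple_int (mu : set -> R) (l : list (R * set)) : R :=
  fold_right (fun p acc => fst p * mu (snd p) + acc) 0 l.

Definition B_fun (A : set -> Prop) (f : Omega -> R) : Prop :=
  forall eps, 0 < eps -> exists l, simple_in A l /\
    forall w, Rabs (f w - simple_eval l w) <= eps.

Definition is_integral (A : set -> Prop) (mu : set -> R) (f : Omega -> R)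
  (v : R) : Prop :=
  forall eps, 0 < eps -> exists delta, 0 < delta /\
    forall l, simple_in A l ->
      (forall w, Rabs (f w - simple_eval l w) <= delta) ->
      Rabs (simple_int mu l - v) <= eps.

(** int f dmu (well defined and unique for f in B(Omega,A), mu in ba(Omega,A)). *)
Definition integral (A : set -> Prop) (mu : set -> R) (f : Omega -> R) : R :=
  epsilon (inhabits 0) (is_integral A mu f).

(** Weak-star closure in ba(Omega, A) of a set S of set functions:
    every basic weak-star neighbourhood of P meets S. *)
Definition wstar_closure (A : set -> Prop) (S : (set -> R) -> Prop)
  (P : set -> R) : Prop :=
  ba A P /\
  forall fs : list (Omega -> R), Forall (B_fun A) fs ->
  forall eps, 0 < eps -> exists Q, S Q /\
    Forall (fun f => Rabs (integral A P f - integral A Q f) < eps) fs.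

End TypeSpaces.

Section TypeSpaceDefs.

Context {N Omega : Type}.

Definition type_space (A : @set Omega -> Prop) (M : N -> @set Omega -> Prop)
  (t : N -> Omega -> @set Omega -> R) : Prop :=
  inhabited N /\ is_field A /\
  (forall i, is_field (M i)) /\
  (forall i E, M i E -> A E) /\
  (forall i w, pba A (t i w)) /\
  (forall i E, A E -> B_fun (M i) (fun w => t i w E)) /\
  (forall i E w, M i E -> E w -> t i w E = 1).

Definition conv_types (t : N -> Omega -> @set Omega -> R) (i : N)
  (Q : @set Omega -> R) : Prop :=
  exists l : list (R * Omega),
    Forall (fun p => 0 <= fst p) l /\
    fold_right (fun p acc => fst p + acc) 0 l = 1 /\
    forall E, Q E = fold_right (fun p acc => fst p * t i (snd p) E + acc) 0 l.

Definition Pi (A : @set Omega -> Prop) (t : N -> Omega -> @set Omega -> R)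
  (i : N) : (@set Omega -> R) -> Prop :=
  wstar_closure A (conv_types t i).

Definition consistent (A : @set Omega -> Prop) (t : N -> Omega -> @set Omega -> R)
  : Prop :=
  forall I : list N, exists P, forall i, In i I -> Pi A t i P.

Definition cc_component (A : @set Omega -> Prop) (t : N -> Omega -> @set Omega -> R)
  (I : list N) (S : @set Omega) : Prop :=
  (exists w, S w) /\
  exists E, A E /\ (forall w, E w -> S w) /\
    forall w, S w -> forall i, In i I -> t i w E = 1.

Definition commonly_certain (A : @set Omega -> Prop) (t : N -> Omega -> @set Omega -> R)
  (I : list N) (E : @set Omega) (w : Omega) : Prop :=
  exists S, cc_component A t I S /\ S w /\ forall w', S w' -> E w'.

(** (f_i)_{i in I} is a semi-bet (I a finite set of players, listed without
    repetition; only the values f i for i in I matter). *)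
Definition semi_bet (A : @set Omega -> Prop) (t : N -> Omega -> @set Omega -> R)
  (I : list N) (f : N -> Omega -> R) : Prop :=
  NoDup I /\ (forall i, In i I -> B_fun A (f i)) /\
  forall w, commonly_certain A t I
    (fun w' => forall i, In i I -> 0 <= integral A (t i w') (f i)) w.

Definition money_pump (A : @set Omega -> Prop) (t : N -> Omega -> @set Omega -> R)
  : Prop :=
  forall P, pba A P -> exists (I : list N) (f : N -> Omega -> R),
    semi_bet A t I f /\
    integral A P (fun w => fold_right (fun i acc => f i w + acc) 0 I) < 0.

End TypeSpaceDefs.

(* If the beliefs are consistent, compactness of the finitely additive probabilities
   (an ultrafilter argument) gives one prior P lying in every Pi_i.  A semi-bet gives
   each player a nonnegative expected value under each of his types, hence under every
   element of Pi_i and in particular under P, so no semi-bet has negative total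
   expectation under P: there is no money pump.

   If they are inconsistent, some finite intersection of the Pi_i is empty, and finitely
   many events F and a tolerance e already witness it.  The vectors
   (Q_i(E) - Q_i0(E))_(i, E), with Q_i in the convex hull of the types of i, then form a
   convex set staying e away from 0, and a near-nearest point u to 0 satisfies
   <u, v> >= e^2/2 on it.  Read as bets on the events of F (player i0 taking the other
   side), u gives bets summing to 0 whose expected values, summed over any choice of
   types, are >= e^2/2; subtracting from each player the infimum of his expected value
   over his types yields a semi-bet with negative constant total. *)

From Stdlib Require Import Reals List Lra Psatz Classical ClassicalEpsilon
  FunctionalExtensionality PropExtensionality.
From mathcomp Require classical_sets filter.
Import ListNotations.
Open Scope R_scope.

Lemma eq_of_forall_dist_le (x y : R) : (forall e, 0 < e -> Rabs (x - y) <= e) -> x = y.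
Proof.
  intros H. apply NNPP; intros Hne.
  assert (Hpos : 0 < Rabs (x - y)) by (apply Rabs_pos_lt; lra).
  specialize (H (Rabs (x - y) / 2) ltac:(lra)). lra.
Qed.

Definition lsum {X : Type} (l : list X) (g : X -> R) : R :=
  fold_right (fun x acc => g x + acc) 0 l.

Section FiniteSums.
Context {X : Type}.
Implicit Types (l : list X) (g h : X -> R).

Lemma lsum_app l1 l2 g : lsum (l1 ++ l2) g = lsum l1 g + lsum l2 g.
Proof. induction l1 as [|x l1 IH]; simpl; [lra|]. unfold lsum in *; simpl; rewrite IH; lra. Qed.

Lemma lsum_add l g h : lsum l (fun x => g x + h x) = lsum l g + lsum l h.
Proof. induction l as [|x l IH]; unfold lsum in *; simpl; [lra|]. rewrite IH; lra. Qed.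

Lemma lsum_scal l c g : lsum l (fun x => c * g x) = c * lsum l g.
Proof. induction l as [|x l IH]; unfold lsum in *; simpl; [lra|]. rewrite IH; lra. Qed.

Lemma lsum_sub l g h : lsum l (fun x => g x - h x) = lsum l g - lsum l h.
Proof. induction l as [|x l IH]; unfold lsum in *; simpl; [lra|]. rewrite IH; lra. Qed.

Lemma lsum_ext l g h : (forall x, In x l -> g x = h x) -> lsum l g = lsum l h.
Proof.
  induction l as [|x l IH]; intros H; [reflexivity|].
  change (g x + lsum l g = h x + lsum l h).
  rewrite (H x (or_introl eq_refl)), IH; [reflexivity|]. intros y Hy; apply H; right; exact Hy.
Qed.

Lemma lsum_le l g h : (forall x, In x l -> g x <= h x) -> lsum l g <= lsum l h.
Proof.
  induction l as [|x l IH]; intros H; [apply Rle_refl|].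
  change (g x + lsum l g <= h x + lsum l h).
  apply Rplus_le_compat; [apply H; left; reflexivity|].
  apply IH; intros y Hy; apply H; right; exact Hy.
Qed.

Lemma lsum_const l c : lsum l (fun _ => c) = INR (length l) * c.
Proof.
  induction l as [|x l IH]; [simpl; ring|].
  change (c + lsum l (fun _ => c) = INR (S (length l)) * c). rewrite IH, S_INR; ring.
Qed.

Lemma lsum_nonneg l g : (forall x, In x l -> 0 <= g x) -> 0 <= lsum l g.
Proof. intros H. rewrite <- (Rmult_0_r (INR (length l))), <- lsum_const. apply lsum_le, H. Qed.

Lemma lsum_term_le l g x : (forall y, In y l -> 0 <= g y) -> In x l -> g x <= lsum l g.
Proof.
  induction l as [|y l IH]; intros H Hx; [destruct Hx|].
  change (g x <= g y + lsum l g).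
  assert (0 <= lsum l g) by (apply lsum_nonneg; intros z Hz; apply H; right; exact Hz).
  assert (0 <= g y) by (apply H; left; reflexivity).
  destruct Hx as [<-|Hx]; [lra|].
  assert (g x <= lsum l g) by (apply IH; auto; intros z Hz; apply H; right; exact Hz). lra.
Qed.

Lemma lsum_abs l g : Rabs (lsum l g) <= lsum l (fun x => Rabs (g x)).
Proof.
  induction l as [|x l IH]; [simpl; rewrite Rabs_R0; lra|].
  change (Rabs (g x + lsum l g) <= Rabs (g x) + lsum l (fun x => Rabs (g x))).
  eapply Rle_trans; [apply Rabs_triang|lra].
Qed.

End FiniteSums.

Lemma lsum_map {X Y : Type} (f : Y -> X) (l : list Y) (g : X -> R) :
  lsum (map f l) g = lsum l (fun y => g (f y)).
Proof. induction l as [|y l IH]; unfold lsum in *; simpl; [lra|]. rewrite IH; lra. Qed.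

Lemma lsum_swap {X Y : Type} (l : list X) (m : list Y) (g : X -> Y -> R) :
  lsum l (fun x => lsum m (g x)) = lsum m (fun y => lsum l (fun x => g x y)).
Proof.
  induction l as [|x l IH].
  - unfold lsum at 1. rewrite (lsum_ext m _ (fun _ => 0)) by reflexivity.
    rewrite lsum_const; simpl; lra.
  - change (lsum m (g x) + lsum l (fun x => lsum m (g x)) =
            lsum m (fun y => g x y + lsum l (fun x => g x y))).
    rewrite IH, lsum_add. reflexivity.
Qed.

Lemma lsum_list_prod {X Y : Type} (l : list X) (m : list Y) (g : X * Y -> R) :
  lsum (list_prod l m) g = lsum l (fun x => lsum m (fun y => g (x, y))).
Proof.
  induction l as [|x l IH]; [reflexivity|]. simpl list_prod.
  rewrite lsum_app, lsum_map, IH. reflexivity.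
Qed.

Lemma set_ext {Omega : Type} (E F : @set Omega) : (forall w, E w <-> F w) -> E = F.
Proof.
  intros H; apply functional_extensionality; intros w.
  apply propositional_extensionality; auto.
Qed.

Definition scale_coefs {Z : Type} (c : R) (l : list (R * Z)) :=
  map (fun p => (c * fst p, snd p)) l.

Section SimpleFunctions.
Context {Omega : Type}.
Implicit Types (E G : @set Omega) (l : list (R * @set Omega)) (mu P Q : @set Omega -> R).

Lemma indicator_in E w : E w -> indicator E w = 1.
Proof. unfold indicator; destruct (excluded_middle_informative (E w)); tauto. Qed.

Lemma indicator_out E w : ~ E w -> indicator E w = 0.
Proof. unfold indicator; destruct (excluded_middle_informative (E w)); tauto. Qed.

Lemma simple_eval_lsum l w : simple_eval l w = lsum l (fun p => fst p * indicator (snd p) w).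
Proof. reflexivity. Qed.

Lemma simple_int_lsum mu l : simple_int mu l = lsum l (fun p => fst p * mu (snd p)).
Proof. reflexivity. Qed.

Lemma simple_eval_cons p l w :
  simple_eval (p :: l) w = fst p * indicator (snd p) w + simple_eval l w.
Proof. reflexivity. Qed.

Lemma simple_int_cons mu p l : simple_int mu (p :: l) = fst p * mu (snd p) + simple_int mu l.
Proof. reflexivity. Qed.

Lemma simple_eval_app l1 l2 w : simple_eval (l1 ++ l2) w = simple_eval l1 w + simple_eval l2 w.
Proof. rewrite !simple_eval_lsum, lsum_app; reflexivity. Qed.

Lemma simple_int_app mu l1 l2 : simple_int mu (l1 ++ l2) = simple_int mu l1 + simple_int mu l2.
Proof. rewrite !simple_int_lsum, lsum_app; reflexivity. Qed.

Lemma simple_eval_scale c l w : simple_eval (scale_coefs c l) w = c * simple_eval l w.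
Proof.
  rewrite !simple_eval_lsum; unfold scale_coefs; rewrite lsum_map, <- lsum_scal.
  apply lsum_ext; intros; simpl; ring.
Qed.

Lemma simple_int_scale mu c l : simple_int mu (scale_coefs c l) = c * simple_int mu l.
Proof.
  rewrite !simple_int_lsum; unfold scale_coefs; rewrite lsum_map, <- lsum_scal.
  apply lsum_ext; intros; simpl; ring.
Qed.

Lemma simple_int_add mu1 mu2 l :
  simple_int (fun E => mu1 E + mu2 E) l = simple_int mu1 l + simple_int mu2 l.
Proof. rewrite !simple_int_lsum, <- lsum_add; apply lsum_ext; intros; ring. Qed.

Definition weight l := lsum l (fun p => Rabs (fst p)).

Lemma weight_nonneg l : 0 <= weight l.
Proof. apply lsum_nonneg; intros p _; apply Rabs_pos. Qed.

Lemma simple_int_charge_dist_le P Q l e :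
  (forall p, In p l -> Rabs (P (snd p) - Q (snd p)) <= e) ->
  Rabs (simple_int P l - simple_int Q l) <= weight l * e.
Proof.
  intros H. rewrite !simple_int_lsum, <- lsum_sub.
  rewrite (lsum_ext l _ (fun p => fst p * (P (snd p) - Q (snd p)))) by (intros; ring).
  eapply Rle_trans; [apply lsum_abs|].
  unfold weight; rewrite Rmult_comm, <- lsum_scal. apply lsum_le; intros p Hp.
  rewrite Rabs_mult. specialize (H p Hp). pose proof (Rabs_pos (fst p)). nra.
Qed.

Section Field.
Variable A : @set Omega -> Prop.
Hypothesis HA : is_field A.

Lemma field_setU E G : A E -> A G -> A (setU E G).
Proof.
  destruct HA as [_ [HC HI]]. intros HE HG.
  replace (setU E G) with (setC (setI (setC E) (setC G))); [auto|].
  apply set_ext; unfold setC, setI, setU; intros w; tauto.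
Qed.

Lemma simple_in_scale c l : simple_in A l -> simple_in A (scale_coefs c l).
Proof.
  unfold simple_in, scale_coefs; intros H.
  apply Forall_map; eapply Forall_impl; [|exact H]; auto.
Qed.

Lemma simple_int_ext mu1 mu2 l :
  simple_in A l -> (forall E, A E -> mu1 E = mu2 E) -> simple_int mu1 l = simple_int mu2 l.
Proof.
  intros Hl H. rewrite !simple_int_lsum. apply lsum_ext; intros p Hp.
  unfold simple_in in Hl; rewrite Forall_forall in Hl. rewrite H; [reflexivity|exact (Hl p Hp)].
Qed.

Variable mu : @set Omega -> R.
Hypothesis mu_add : fin_additive A mu.
Hypothesis mu_nonneg : forall E, A E -> 0 <= mu E.

Lemma measure_empty G : A G -> (forall w, ~ G w) -> mu G = 0.
Proof.
  intros HG Hn. pose proof (mu_add G G HG HG (fun w h => Hn w (proj1 h))) as H.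
  replace (setU G G) with G in H by (apply set_ext; unfold setU; tauto). lra.
Qed.

Lemma measure_split G E : A G -> A E -> mu G = mu (setI G E) + mu (setI G (setC E)).
Proof.
  intros HG HE. destruct HA as [_ [HC HI]].
  rewrite <- mu_add; [|auto|auto|unfold setI, setC; tauto].
  f_equal; apply set_ext; unfold setU, setI, setC; intros w.
  destruct (classic (E w)); tauto.
Qed.

Lemma simple_int_restrict_lb l G a :
  simple_in A l -> A G -> (forall w, G w -> a <= simple_eval l w) ->
  a * mu G <= simple_int (fun E => mu (setI E G)) l.
Proof.
  revert G a; induction l as [|[c E] l IH]; intros G a Hl HG Hlb.
  - destruct (classic (exists w, G w)) as [[w Gw]|Hempty].
    + specialize (Hlb w Gw). pose proof (mu_nonneg G HG). simpl in *. nra.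
    + rewrite measure_empty; auto; [simpl; lra|]. intros w Gw; eauto.
  - inversion Hl as [|? ? HE Hl']; subst; simpl in HE.
    destruct HA as [_ [HC HI]].
    assert (IH1 : (a - c) * mu (setI G E) <= simple_int (fun F => mu (setI F (setI G E))) l).
    { apply IH; auto. intros w [Gw Ew]. specialize (Hlb w Gw).
      rewrite simple_eval_cons, indicator_in in Hlb by auto. simpl in Hlb. lra. }
    assert (IH2 : a * mu (setI G (setC E)) <=
                  simple_int (fun F => mu (setI F (setI G (setC E)))) l).
    { apply IH; auto. intros w [Gw Ew]. specialize (Hlb w Gw).
      rewrite simple_eval_cons, indicator_out in Hlb by auto. simpl in Hlb. lra. }
    assert (Hsplit : simple_int (fun F => mu (setI F G)) l =
        simple_int (fun F => mu (setI F (setI G E))) l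
        + simple_int (fun F => mu (setI F (setI G (setC E)))) l).
    { rewrite <- simple_int_add. apply simple_int_ext; [exact Hl'|]. intros F HF.
      rewrite (measure_split (setI F G) E) by auto.
      f_equal; f_equal; apply set_ext; unfold setI, setC; tauto. }
    rewrite simple_int_cons, Hsplit, (measure_split G E) by auto. simpl fst; simpl snd.
    replace (setI E G) with (setI G E) by (apply set_ext; unfold setI; tauto). lra.
Qed.

End Field.
End SimpleFunctions.

Section Integral.
Context {Omega : Type}.
Variable A : @set Omega -> Prop.
Hypothesis HA : is_field A.
Implicit Types (E : @set Omega) (l : list (R * @set Omega)) (f g : Omega -> R).

Definition unif_close f g (d : R) := forall w, Rabs (f w - g w) <= d.

Lemma B_fun_simple l : simple_in A l -> B_fun A (simple_eval l).
Proof. intros Hl e He. exists l; split; auto. intros w. rewrite Rminus_diag, Rabs_R0. lra. Qed.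

Lemma B_fun_indicator E : A E -> B_fun A (indicator E).
Proof.
  intros HE e He. exists [(1, E)]; split; [repeat constructor; auto|]. intros w.
  rewrite simple_eval_cons; simpl. replace (indicator E w - (1 * indicator E w + 0)) with 0 by ring.
  rewrite Rabs_R0; lra.
Qed.

Lemma B_fun_add f g : B_fun A f -> B_fun A g -> B_fun A (fun w => f w + g w).
Proof.
  intros Hf Hg e He.
  destruct (Hf (e / 2) ltac:(lra)) as [lf [Hlf Hdf]], (Hg (e / 2) ltac:(lra)) as [lg [Hlg Hdg]].
  exists (lf ++ lg); split; [apply Forall_app; auto|]. intros w.
  specialize (Hdf w); specialize (Hdg w). rewrite simple_eval_app. split_Rabs; lra.
Qed.

Lemma B_fun_lsum {K : Type} (I : list K) (f : K -> Omega -> R) :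
  (forall i, In i I -> B_fun A (f i)) -> B_fun A (fun w => lsum I (fun i => f i w)).
Proof.
  induction I as [|i I IH]; intros Hf.
  - apply (B_fun_simple []), Forall_nil.
  - apply (B_fun_add (f i)); [apply Hf; left; auto|]. apply IH; intros; apply Hf; right; auto.
Qed.

Variable mu : @set Omega -> R.
Hypothesis Hmu : pba A mu.

Lemma pba_bounds E : A E -> 0 <= mu E <= 1.
Proof.
  intros HE. destruct Hmu as [Hadd [Hnn H1]], HA as [_ [HC _]].
  pose proof (Hadd E (setC E) HE (HC E HE) (fun w h => proj2 h (proj1 h))) as H.
  replace (setU E (setC E)) with (@setT Omega) in H
    by (apply set_ext; unfold setU, setC, setT; intros w; tauto).
  pose proof (Hnn E HE); pose proof (Hnn _ (HC E HE)). lra.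
Qed.

Lemma pba_inhabited : inhabited Omega.
Proof.
  apply NNPP; intros Hn. destruct Hmu as [Hadd [_ H1]].
  rewrite (measure_empty A mu Hadd setT (proj1 HA)) in H1; [lra|].
  intros w _; apply Hn; exact (inhabits w).
Qed.

Lemma simple_int_lb l a :
  simple_in A l -> (forall w, a <= simple_eval l w) -> a <= simple_int mu l.
Proof.
  intros Hl Hw. destruct Hmu as [Hadd [Hnn H1]].
  pose proof (simple_int_restrict_lb A HA mu Hadd Hnn l setT a Hl (proj1 HA) (fun w _ => Hw w)).
  rewrite H1, Rmult_1_r in H.
  erewrite simple_int_ext in H; [exact H|exact Hl|].
  intros E _; f_equal; apply set_ext; unfold setI, setT; tauto.
Qed.

Lemma simple_int_sup_dist_le l1 l2 d : simple_in A l1 -> simple_in A l2 ->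
  unif_close (simple_eval l1) (simple_eval l2) d ->
  Rabs (simple_int mu l1 - simple_int mu l2) <= d.
Proof.
  intros H1 H2 Hd.
  assert (Hlb : forall l l', simple_in A l -> simple_in A l' ->
            unif_close (simple_eval l) (simple_eval l') d ->
            - d <= simple_int mu l - simple_int mu l').
  { intros l l' Hl Hl' Hll'.
    replace (simple_int mu l - simple_int mu l') with (simple_int mu (l ++ scale_coefs (-1) l'))
      by (rewrite simple_int_app, simple_int_scale; ring).
    apply simple_int_lb.
    - apply Forall_app; split; auto. apply simple_in_scale; auto.
    - intros w; rewrite simple_eval_app, simple_eval_scale.
      specialize (Hll' w); split_Rabs; lra. }
  pose proof (Hlb l1 l2 H1 H2 Hd).
  assert (- d <= simple_int mu l2 - simple_int mu l1).
  { apply Hlb; auto. intros w; rewrite Rabs_minus_sym; apply Hd. }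
  split_Rabs; lra.
Qed.

(* The integral is the supremum of the lower bounds [simple_int mu l - d]. *)
Lemma integral_approx_exists f : B_fun A f -> exists v, forall l d,
  simple_in A l -> unif_close f (simple_eval l) d -> Rabs (simple_int mu l - v) <= d.
Proof.
  intros Hf.
  set (S := fun y => exists l d, simple_in A l /\ unif_close f (simple_eval l) d /\
                                 y = simple_int mu l - d).
  assert (Hcmp : forall l d l' d', simple_in A l -> unif_close f (simple_eval l) d ->
            simple_in A l' -> unif_close f (simple_eval l') d' ->
            simple_int mu l' - d' <= simple_int mu l + d).
  { intros l d l' d' Hl Hd Hl' Hd'.
    assert (Rabs (simple_int mu l' - simple_int mu l) <= d + d').
    { apply simple_int_sup_dist_le; auto. intros w.
      specialize (Hd w); specialize (Hd' w). split_Rabs; lra. }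
    split_Rabs; lra. }
  destruct (Hf 1 Rlt_0_1) as [l0 [Hl0 Hd0]].
  assert (Hb : bound S).
  { exists (simple_int mu l0 + 1). intros y [l [d [Hl [Hd ->]]]]. eapply Hcmp; eauto. }
  assert (HS : S (simple_int mu l0 - 1)) by (exists l0, 1; auto).
  destruct (completeness S Hb (ex_intro _ _ HS)) as [v [Hub Hlub]].
  exists v. intros l d Hl Hd.
  assert (v <= simple_int mu l + d).
  { apply Hlub. intros y [l' [d' [Hl' [Hd' ->]]]]. eapply Hcmp; eauto. }
  assert (simple_int mu l - d <= v) by (apply Hub; exists l, d; auto).
  split_Rabs; lra.
Qed.

Lemma integral_spec f l d : B_fun A f -> simple_in A l -> unif_close f (simple_eval l) d ->
  Rabs (simple_int mu l - integral A mu f) <= d.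
Proof.
  intros Hf. destruct (integral_approx_exists f Hf) as [v Hv].
  assert (Hint : is_integral A mu f (integral A mu f)).
  { unfold integral. apply epsilon_spec. exists v. intros e He. exists e; split; auto. }
  replace (integral A mu f) with v; [apply Hv|].
  apply eq_of_forall_dist_le. intros e He.
  destruct (Hint (e / 2) ltac:(lra)) as [delta [Hdelta Happ]].
  destruct (Hf (Rmin delta (e / 2)) ltac:(apply Rmin_glb_lt; lra)) as [l' [Hl' Hd']].
  assert (H1 : Rabs (simple_int mu l' - integral A mu f) <= e / 2).
  { apply Happ; auto. intros w; eapply Rle_trans; [apply Hd'|apply Rmin_l]. }
  assert (H2 : Rabs (simple_int mu l' - v) <= e / 2).
  { apply Hv; auto. intros w; eapply Rle_trans; [apply Hd'|apply Rmin_r]. }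
  split_Rabs; lra.
Qed.

Lemma integral_simple l f : simple_in A l -> (forall w, f w = simple_eval l w) ->
  integral A mu f = simple_int mu l.
Proof.
  intros Hl Hf. assert (Hfl : f = simple_eval l) by (apply functional_extensionality; auto).
  subst f. pose proof (integral_spec (simple_eval l) l 0 (B_fun_simple l Hl) Hl) as H.
  assert (Rabs (simple_int mu l - integral A mu (simple_eval l)) <= 0).
  { apply H. intros w; rewrite Rminus_diag, Rabs_R0; lra. }
  split_Rabs; lra.
Qed.

Lemma integral_const f c : (forall w, f w = c) -> integral A mu f = c.
Proof.
  intros Hf. rewrite (integral_simple [(c, setT)]).
  - rewrite simple_int_cons; simpl. destruct Hmu as [_ [_ ->]]. ring.
  - repeat constructor. apply HA.
  - intros w. rewrite simple_eval_cons, indicator_in by exact I. simpl. rewrite Hf; ring.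
Qed.

Lemma integral_indicator E : A E -> integral A mu (indicator E) = mu E.
Proof.
  intros HE. rewrite (integral_simple [(1, E)]).
  - rewrite simple_int_cons; simpl; ring.
  - repeat constructor; auto.
  - intros w. rewrite simple_eval_cons; simpl; ring.
Qed.

Lemma integral_add f g : B_fun A f -> B_fun A g ->
  integral A mu (fun w => f w + g w) = integral A mu f + integral A mu g.
Proof.
  intros Hf Hg. apply eq_of_forall_dist_le. intros e He.
  destruct (Hf (e / 4) ltac:(lra)) as [lf [Hlf Hdf]], (Hg (e / 4) ltac:(lra)) as [lg [Hlg Hdg]].
  pose proof (integral_spec f lf _ Hf Hlf Hdf).
  pose proof (integral_spec g lg _ Hg Hlg Hdg).
  assert (Rabs (simple_int mu (lf ++ lg) - integral A mu (fun w => f w + g w)) <= e / 2).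
  { apply integral_spec; [apply B_fun_add; auto|apply Forall_app; auto|].
    intros w. specialize (Hdf w); specialize (Hdg w). rewrite simple_eval_app. split_Rabs; lra. }
  rewrite simple_int_app in *. split_Rabs; lra.
Qed.

Lemma integral_lsum {K : Type} (I : list K) (f : K -> Omega -> R) :
  (forall i, In i I -> B_fun A (f i)) ->
  integral A mu (fun w => lsum I (fun i => f i w)) = lsum I (fun i => integral A mu (f i)).
Proof.
  induction I as [|i I IH]; intros Hf.
  - apply integral_const; reflexivity.
  - change (integral A mu (fun w => f i w + lsum I (fun j => f j w)) =
            integral A mu (f i) + lsum I (fun j => integral A mu (f j))).
    rewrite integral_add, IH; auto; [intros; apply Hf; right; auto|apply Hf; left; auto|].
    apply B_fun_lsum; intros; apply Hf; right; auto.
Qed.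

End Integral.

Section Adherence.
Context {Omega : Type}.
Implicit Types (P Q : @set Omega -> R) (F : list (@set Omega)) (S : (@set Omega -> R) -> Prop).

Definition closeF P Q F (e : R) := forall E, In E F -> Rabs (P E - Q E) < e.

Definition approx_by S P F e := exists Q, S Q /\ closeF P Q F e.

Variable A : @set Omega -> Prop.

Definition adherent S P := forall F, Forall A F -> forall e, 0 < e -> approx_by S P F e.

Definition jointly_approximable {K : Type} (S : K -> (@set Omega -> R) -> Prop) (I : list K) :=
  forall F, Forall A F -> forall e, 0 < e ->
    exists P, pba A P /\ forall i, In i I -> approx_by (S i) P F e.

Lemma not_closeF P Q F e : ~ closeF P Q F e -> exists E, In E F /\ e <= Rabs (P E - Q E).
Proof.
  intros H. apply NNPP; intros Hn. apply H; intros E HE.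
  apply Rnot_le_lt; intros Hle. apply Hn; eauto.
Qed.

Lemma not_jointly_approximable {K : Type} (S : K -> (@set Omega -> R) -> Prop) (I : list K) :
  ~ jointly_approximable S I -> exists F e, Forall A F /\ 0 < e /\
    forall P, pba A P -> exists i, In i I /\ ~ approx_by (S i) P F e.
Proof.
  intros H. apply NNPP; intros Hn. apply H; intros F HF e He.
  apply NNPP; intros Hno. apply Hn. exists F, e; repeat split; auto.
  intros P HP. apply NNPP; intros Hall. apply Hno. exists P; split; auto.
  intros i Hi. apply NNPP; intros Hi'. apply Hall; eauto.
Qed.

End Adherence.

Section Ultralimits.
Context {X : Type}.
Variable U : (X -> Prop) -> Prop.
Hypothesis HU : filter.UltraFilter U.

Lemma ultra_common (S1 S2 : X -> Prop) : U S1 -> U S2 -> exists x, S1 x /\ S2 x.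
Proof. intros H1 H2. exact (filter.filter_ex (filter.filterI H1 H2)). Qed.

Lemma ultra_limit_exists (g : X -> R) (b : R) : (forall x, Rabs (g x) <= b) ->
  exists L, forall e, 0 < e -> U (fun x => Rabs (g x - L) < e).
Proof.
  intros Hb. set (Lower := fun y => U (fun x => y <= g x)).
  assert (Hbound : bound Lower).
  { exists b. intros y Hy. destruct (filter.filter_ex Hy) as [x Hx].
    specialize (Hb x). split_Rabs; lra. }
  assert (HT : Lower (- b)).
  { unfold Lower. apply (filter.filterS (P := classical_sets.setT)); [|apply filter.filterT].
    intros x _. specialize (Hb x). split_Rabs; lra. }
  destruct (completeness Lower Hbound (ex_intro _ _ HT)) as [L [Hub Hlub]].
  exists L. intros e He.
  assert (Hlow : U (fun x => L - e < g x)).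
  { apply NNPP; intros Hn. assert (L <= L - e); [|lra].
    apply Hlub. intros y Ty. apply Rnot_lt_le; intros Hy. apply Hn.
    apply (filter.filterS (P := fun x => y <= g x)); [|exact Ty]. intros x Hx; lra. }
  assert (Hup : U (fun x => g x < L + e)).
  { destruct (filter.in_ultra_setVsetC (fun x => L + e <= g x) HU) as [H|H].
    - specialize (Hub _ H). lra.
    - apply (filter.filterS (P := classical_sets.setC (fun x => L + e <= g x))); [|exact H].
      intros x Hx; apply Rnot_le_lt, Hx. }
  apply (filter.filterS (P := fun x => L - e < g x /\ g x < L + e)).
  - intros x [H1 H2]. apply Rabs_def1; lra.
  - exact (filter.filterI Hlow Hup).
Qed.

Context {Omega : Type}.
Variable A : @set Omega -> Prop.
Hypothesis HA : is_field A.
Variable P : X -> @set Omega -> R.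
Hypothesis HP : forall x, pba A (P x).

Lemma pba_ultralimit : exists Q, pba A Q /\
  forall E, A E -> forall e, 0 < e -> U (fun x => Rabs (P x E - Q E) < e).
Proof.
  destruct (choice (fun E L => A E -> forall e, 0 < e -> U (fun x => Rabs (P x E - L) < e)))
    as [Q HQ].
  { intros E. destruct (classic (A E)) as [HE|HE]; [|exists 0; tauto].
    destruct (ultra_limit_exists (fun x => P x E) 1) as [L HL]; [|exists L; auto].
    intros x. pose proof (pba_bounds A HA (P x) (HP x) E HE). split_Rabs; lra. }
  exists Q; split; [|exact HQ]. split; [|split].
  - intros E F HE HF Hdisj. assert (HEF : A (setU E F)) by (apply field_setU; auto).
    apply eq_of_forall_dist_le; intros e He. assert (He3 : 0 < e / 3) by lra.
    destruct (ultra_common _ _ (HQ _ HEF _ He3) (filter.filterI (HQ _ HE _ He3) (HQ _ HF _ He3)))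
      as [x [H1 [H2 H3]]].
    destruct (HP x) as [Hadd _]. rewrite (Hadd E F HE HF Hdisj) in H1. split_Rabs; lra.
  - intros E HE. apply Rnot_lt_le; intros Hneg. assert (Hpos : 0 < - Q E) by lra.
    destruct (filter.filter_ex (HQ E HE _ Hpos)) as [x Hx].
    destruct (HP x) as [_ [Hnn _]]. specialize (Hnn E HE). split_Rabs; lra.
  - apply eq_of_forall_dist_le; intros e He.
    destruct (filter.filter_ex (HQ setT (proj1 HA) e He)) as [x Hx].
    destruct (HP x) as [_ [_ H1]]. rewrite H1 in Hx. split_Rabs; lra.
Qed.

Lemma ultralimit_closeF Q :
  (forall E, A E -> forall e, 0 < e -> U (fun x => Rabs (P x E - Q E) < e)) ->
  forall F, Forall A F -> forall e, 0 < e -> U (fun x => closeF (P x) Q F e).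
Proof.
  intros HQ F HF e He. induction HF as [|E F HE HF IH].
  - apply (filter.filterS (P := classical_sets.setT)); [|apply filter.filterT].
    intros x _ E [].
  - apply (filter.filterS (P := fun x => Rabs (P x E - Q E) < e /\ closeF (P x) Q F e)).
    + intros x [H1 H2] E' [<-|HE']; auto.
    + exact (filter.filterI (HQ E HE e He) IH).
Qed.

End Ultralimits.


Section Compactness.
Context {Omega K : Type}.
Variable A : @set Omega -> Prop.
Hypothesis HA : is_field A.
Variable S : K -> (@set Omega -> R) -> Prop.
Variable J : K -> Prop.
Hypothesis HJ : forall I, (forall i, In i I -> J i) -> jointly_approximable A S I.

Record stage := Stage {
  stage_players : list K;
  stage_events : list (@set Omega);
  stage_tol : R }.

Definition valid_stage (x : stage) :=
  (forall i, In i (stage_players x) -> J i) /\ Forall A (stage_events x) /\ 0 < stage_tol x.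

Definition later_stages (x0 x : stage) :=
  valid_stage x /\ incl (stage_players x0) (stage_players x) /\
  incl (stage_events x0) (stage_events x) /\ stage_tol x <= stage_tol x0.

Lemma stage_filter_proper : filter.ProperFilter (filter.filter_from valid_stage later_stages).
Proof.
  apply filter.filter_from_proper; [apply filter.filter_from_filter|].
  - exists (Stage [] [] 1). repeat split; [intros i []|constructor|simpl; lra].
  - intros [I1 F1 e1] [I2 F2 e2] [HI1 [HF1 He1]] [HI2 [HF2 He2]].
    exists (Stage (I1 ++ I2) (F1 ++ F2) (Rmin e1 e2)).
    + repeat split; simpl.
      * intros i Hi; apply in_app_or in Hi as [Hi|Hi]; auto.
      * apply Forall_app; auto.
      * apply Rmin_glb_lt; auto.
    + intros x [Hx [HIx [HFx Hex]]]; simpl in *.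
      pose proof (Rmin_l e1 e2); pose proof (Rmin_r e1 e2).
      split; (split; [exact Hx|]); simpl; repeat split; try lra; intros a Ha;
        (apply HIx || apply HFx); apply in_or_app; auto.
  - intros x0 Hx0. exists x0. split; [exact Hx0|]. repeat split; try apply incl_refl. lra.
Qed.

Lemma stage_choice : exists Px : stage -> @set Omega -> R, forall x,
  pba A (Px x) /\ (valid_stage x -> forall i, In i (stage_players x) ->
                    approx_by (S i) (Px x) (stage_events x) (stage_tol x)).
Proof.
  apply (choice (fun x P => pba A P /\ (valid_stage x -> forall i, In i (stage_players x) ->
                    approx_by (S i) P (stage_events x) (stage_tol x)))).
  intros x. destruct (classic (valid_stage x)) as [[HI [HF He]]|Hx].
  - destruct (HJ _ HI _ HF _ He) as [P [HP Happ]]. exists P; auto.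
  - destruct (HJ [] (fun i (Hi : In i []) => match Hi with end) [] (Forall_nil _) 1 Rlt_0_1)
      as [P [HP _]].
    exists P; split; [exact HP|contradiction].
Qed.

(* Compactness of pba for setwise convergence on A: an ultralimit, along stages of
   growing precision, of probabilities that are good at each stage. *)
Theorem pba_adherent_all : exists P, pba A P /\ forall i, J i -> adherent A (S i) P.
Proof.
  destruct (filter.ultraFilterLemma stage_filter_proper) as [U [HU Hsub]].
  destruct stage_choice as [Px HPx].
  destruct (pba_ultralimit U HU A HA Px (fun x => proj1 (HPx x))) as [P [HP Hlim]].
  exists P; split; [exact HP|]. intros i Hi F HF e He.
  assert (Hlater : U (later_stages (Stage [i] F (e / 2)))).
  { apply Hsub, filter.in_filter_from. repeat split; simpl; auto; [|lra].
    intros j [<-|[]]; auto. }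
  destruct (ultra_common U HU _ _ Hlater (ultralimit_closeF U HU A Px P Hlim F HF (e / 2)
              ltac:(lra))) as [x [[Hx [HIx [HFx Hex]]] Hclose]].
  destruct (proj2 (HPx x) Hx i (HIx i (or_introl eq_refl))) as [Q [HQ HPQ]].
  exists Q; split; [exact HQ|]. intros E HE.
  specialize (Hclose E HE); specialize (HPQ E (HFx E HE)); simpl in Hex.
  split_Rabs; lra.
Qed.

End Compactness.

Section WeakStar.
Context {Omega : Type}.
Variable A : @set Omega -> Prop.
Hypothesis HA : is_field A.
Implicit Types (P Q : @set Omega -> R) (F : list (@set Omega)) (S : (@set Omega -> R) -> Prop).

Lemma closeF_weaken P Q F1 F2 e1 e2 :
  incl F2 F1 -> e1 <= e2 -> closeF P Q F1 e1 -> closeF P Q F2 e2.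
Proof. intros HF He H E HE. specialize (H E (HF E HE)). lra. Qed.

Lemma simple_int_closeF P Q l d : 0 < d ->
  closeF P Q (map snd l) (d / (weight l + 1)) ->
  Rabs (simple_int P l - simple_int Q l) <= d.
Proof.
  intros Hd Hc. pose proof (weight_nonneg l) as Hw.
  eapply Rle_trans.
  - apply simple_int_charge_dist_le. intros p Hp. apply Rlt_le, Hc, in_map, Hp.
  - apply (Rmult_le_reg_r (weight l + 1)); [lra|]. field_simplify; [nra|lra].
Qed.

Lemma integral_closeF P Q f l d : pba A P -> pba A Q -> B_fun A f -> simple_in A l ->
  unif_close f (simple_eval l) d -> 0 < d -> closeF P Q (map snd l) (d / (weight l + 1)) ->
  Rabs (integral A P f - integral A Q f) <= 3 * d.
Proof.
  intros HP HQ Hf Hl Hd Hpos Hc.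
  pose proof (integral_spec A HA P HP f l d Hf Hl Hd).
  pose proof (integral_spec A HA Q HQ f l d Hf Hl Hd).
  pose proof (simple_int_closeF P Q l d Hpos Hc).
  split_Rabs; lra.
Qed.

Lemma integrals_closeF P fs : pba A P -> Forall (B_fun A) fs -> forall eps, 0 < eps ->
  exists F eta, Forall A F /\ 0 < eta /\ forall Q, pba A Q -> closeF P Q F eta ->
    Forall (fun f => Rabs (integral A P f - integral A Q f) < eps) fs.
Proof.
  intros HP Hfs eps Heps. induction Hfs as [|f fs Hf Hfs IH].
  - exists [], 1. repeat split; [constructor|lra|constructor].
  - destruct IH as [F [eta [HF [Heta Hclose]]]].
    destruct (Hf (eps / 4) ltac:(lra)) as [l [Hl Hd]].
    set (eta' := eps / 4 / (weight l + 1)).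
    assert (Heta' : 0 < eta') by (apply Rdiv_lt_0_compat; pose proof (weight_nonneg l); lra).
    exists (map snd l ++ F), (Rmin eta' eta). repeat split.
    + apply Forall_app; split; [apply Forall_map, Hl|exact HF].
    + apply Rmin_glb_lt; auto.
    + intros Q HQ Hc. constructor.
      * pose proof (integral_closeF P Q f l (eps / 4) HP HQ Hf Hl Hd ltac:(lra)) as H.
        assert (Rabs (integral A P f - integral A Q f) <= 3 * (eps / 4)); [|lra].
        apply H. eapply closeF_weaken; [|apply Rmin_l|exact Hc]. intros E HE; apply in_or_app; auto.
      * apply Hclose; auto. eapply closeF_weaken; [|apply Rmin_r|exact Hc].
        intros E HE; apply in_or_app; auto.
Qed.

Lemma wstar_closure_of_adherent S P : (forall Q, S Q -> pba A Q) -> pba A P ->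
  adherent A S P -> wstar_closure A S P.
Proof.
  intros HS HP Hadh. split.
  - split; [apply HP|]. exists 1. intros E HE.
    pose proof (pba_bounds A HA P HP E HE). split_Rabs; lra.
  - intros fs Hfs eps Heps.
    destruct (integrals_closeF P fs HP Hfs eps Heps) as [F [eta [HF [Heta Hclose]]]].
    destruct (Hadh F HF eta Heta) as [Q [HQ HPQ]]. exists Q; split; auto.
Qed.

Lemma wstar_closure_approx S P F e : (forall Q, S Q -> pba A Q) -> wstar_closure A S P ->
  Forall A F -> 0 < e ->
  exists Q, S Q /\ forall E, In E F -> Rabs (integral A P (indicator E) - Q E) < e.
Proof.
  intros HS [_ Hcl] HF He.
  assert (Hind : Forall (B_fun A) (map indicator F)).
  { apply Forall_map. eapply Forall_impl; [|exact HF]. apply B_fun_indicator. }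
  destruct (Hcl _ Hind e He) as [Q [HQ Hclose]]. exists Q; split; [exact HQ|].
  intros E HE. rewrite Forall_forall in Hclose, HF.
  specialize (Hclose _ (in_map _ _ _ HE)).
  rewrite (integral_indicator A HA Q (HS Q HQ) E (HF E HE)) in Hclose. exact Hclose.
Qed.

End WeakStar.

Lemma exists_inf {X : Type} (D : X -> Prop) (g : X -> R) (b : R) :
  (exists x, D x) -> (forall x, D x -> b <= g x) ->
  exists m, (forall x, D x -> m <= g x) /\
            forall eta, 0 < eta -> exists x, D x /\ g x < m + eta.
Proof.
  intros [x0 Hx0] Hb. set (Neg := fun y => exists x, D x /\ y = - g x).
  assert (Hbound : bound Neg) by (exists (- b); intros y [x [Hx ->]]; specialize (Hb x Hx); lra).
  destruct (completeness Neg Hbound (ex_intro _ _ (ex_intro _ x0 (conj Hx0 eq_refl))))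
    as [m [Hub Hlub]].
  exists (- m); split.
  - intros x Hx. specialize (Hub (- g x) (ex_intro _ x (conj Hx eq_refl))). lra.
  - intros eta Heta. apply NNPP; intros Hn. assert (m <= m - eta); [|lra].
    apply Hlub. intros y [x [Hx ->]]. apply Rnot_lt_le; intros Hlt.
    apply Hn; exists x; split; auto; lra.
Qed.

Lemma lsum_inf_ge {K X : Type} (I : list K) (g : K -> X -> R) (c : R) :
  inhabited X -> (forall i, exists b, forall x, b <= g i x) ->
  (forall xs : K -> X, c <= lsum I (fun i => g i (xs i))) ->
  exists a : K -> R, (forall i x, a i <= g i x) /\ c <= lsum I a.
Proof.
  intros [x0] Hb Hc.
  destruct (choice (fun i a => (forall x, a <= g i x) /\
                               forall eta, 0 < eta -> exists x, g i x < a + eta)) as [a Ha].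
  { intros i. destruct (Hb i) as [b Hbi].
    destruct (exists_inf (fun _ => True) (g i) b (ex_intro _ x0 Logic.I) (fun x _ => Hbi x))
      as [m [Hm Happ]].
    exists m; split; [intros x; apply Hm; exact Logic.I|].
    intros eta Heta. destruct (Happ eta Heta) as [x [_ Hx]]; eauto. }
  exists a; split; [intros i x; apply Ha|].
  apply Rnot_lt_le; intros Hlt.
  set (delta := (c - lsum I a) / (2 * (INR (length I) + 1))).
  assert (Hn := pos_INR (length I)).
  assert (Hdelta : 0 < delta) by (apply Rdiv_lt_0_compat; lra).
  destruct (choice (fun i x => g i x < a i + delta)) as [xs Hxs].
  { intros i; apply (proj2 (Ha i)), Hdelta. }
  specialize (Hc xs).
  assert (lsum I (fun i => g i (xs i)) <= lsum I (fun i => a i + delta))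
    by (apply lsum_le; intros i _; apply Rlt_le, Hxs).
  rewrite lsum_add, lsum_const in H.
  assert (INR (length I) * delta < c - lsum I a); [|lra].
  unfold delta. apply (Rmult_lt_reg_r (2 * (INR (length I) + 1))); [lra|].
  field_simplify; [nra|lra].
Qed.

Section NearestPoint.
Context {Y : Type}.
Variable L : list Y.

Definition dot (u v : Y -> R) := lsum L (fun y => u y * v y).

Lemma dot_convex_expand u v s :
  let w := fun y => s * v y + (1 - s) * u y in
  dot w w = dot u u + 2 * s * (dot u v - dot u u)
            + s * s * dot (fun y => v y - u y) (fun y => v y - u y).
Proof.
  intros w. unfold dot, w.
  rewrite <- !lsum_scal, <- lsum_sub, <- lsum_scal, <- !lsum_add.
  apply lsum_ext; intros; ring.
Qed.

Variable C : (Y -> R) -> Prop.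
Hypothesis C_nonempty : exists u, C u.
Hypothesis C_convex : forall u v s, C u -> C v -> 0 <= s <= 1 ->
  C (fun y => s * u y + (1 - s) * v y).
Hypothesis C_bounded : forall u y, C u -> In y L -> Rabs (u y) <= 1.
Variable e : R.
Hypothesis He : 0 < e.
Hypothesis C_far : forall u, C u -> e * e <= dot u u.

Lemma dot_diff_le u v : C u -> C v ->
  dot (fun y => v y - u y) (fun y => v y - u y) <= 4 * INR (length L).
Proof.
  intros Hu Hv. rewrite Rmult_comm, <- lsum_const. apply lsum_le; intros y Hy.
  pose proof (C_bounded u y Hu Hy); pose proof (C_bounded v y Hv Hy). split_Rabs; nra.
Qed.

(* Take [u] minimising the norm on [C] up to [s^2 M]: moving from [u] a step [s]
   towards [v] in [C] cannot decrease the norm by more than that, which bounds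
   [dot u v] from below; [s = e^2 / 2M] balances the two error terms. *)
Theorem convex_separation : exists u, C u /\ forall v, C v -> e * e / 2 <= dot u v.
Proof.
  set (M := 4 * INR (length L) + e * e).
  assert (HM : 4 * INR (length L) <= M) by (unfold M; nra).
  assert (HeM : e * e <= M) by (pose proof (pos_INR (length L)); unfold M; lra).
  assert (HM0 : 0 < M) by nra.
  set (s := e * e / (2 * M)).
  assert (HsM : s * M = e * e / 2) by (unfold s; field; lra).
  assert (Hs : 0 < s) by (unfold s; apply Rdiv_lt_0_compat; nra).
  assert (Hs1 : s <= 1) by (apply Rnot_lt_le; intros Hs1; nra).
  destruct (exists_inf C (fun u => dot u u) (e * e) C_nonempty C_far) as [m [Hm Happ]].
  assert (Heta : 0 < s * s * M) by (apply Rmult_lt_0_compat; nra).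
  destruct (Happ _ Heta) as [u [Hu Hum]].
  exists u; split; [exact Hu|]. intros v Hv.
  pose proof (Hm _ (C_convex v u s Hv Hu (conj (Rlt_le _ _ Hs) Hs1))) as Hmin.
  rewrite (dot_convex_expand u v s) in Hmin.
  pose proof (dot_diff_le u v Hu Hv) as HD.
  pose proof (C_far u Hu).
  assert (s * s * dot (fun y => v y - u y) (fun y => v y - u y) <= s * s * M)
    by (apply Rmult_le_compat_l; nra).
  nra.
Qed.

End NearestPoint.

Section TypeSpaces.
Variables (N Omega : Type) (A : @set Omega -> Prop) (M : N -> @set Omega -> Prop)
  (t : N -> Omega -> @set Omega -> R).
Hypothesis HT : type_space A M t.

Lemma type_space_field : is_field A.
Proof. apply HT. Qed.

Lemma types_pba i w : pba A (t i w).
Proof. apply HT. Qed.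

Lemma conv_typesE i Q : conv_types t i Q <-> exists cl : list (R * Omega),
  (forall p, In p cl -> 0 <= fst p) /\ lsum cl fst = 1 /\
  forall E, Q E = lsum cl (fun p => fst p * t i (snd p) E).
Proof.
  split; intros [cl [H1 [H2 H3]]]; exists cl; rewrite Forall_forall in *; auto.
Qed.

Lemma conv_types_pba i Q : conv_types t i Q -> pba A Q.
Proof.
  intros HQ. destruct (proj1 (conv_typesE i Q) HQ) as [cl [Hc [Hsum HQE]]].
  split; [|split].
  - intros E F HE HF Hd. rewrite !HQE, <- lsum_add. apply lsum_ext; intros p _.
    destruct (types_pba i (snd p)) as [Hadd _]. rewrite Hadd; auto. ring.
  - intros E HE. rewrite HQE. apply lsum_nonneg; intros p Hp.
    destruct (types_pba i (snd p)) as [_ [Hnn _]].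
    apply Rmult_le_pos; [apply Hc, Hp|apply Hnn, HE].
  - rewrite HQE, <- Hsum. apply lsum_ext; intros p _.
    destruct (types_pba i (snd p)) as [_ [_ ->]]. ring.
Qed.

Lemma conv_types_point i w : conv_types t i (t i w).
Proof.
  apply conv_typesE. exists [(1, w)]. split; [|split]; simpl.
  - intros p [<-|[]]; simpl; lra.
  - ring.
  - intros; ring.
Qed.

Lemma conv_types_comb i Q1 Q2 s : 0 <= s <= 1 -> conv_types t i Q1 -> conv_types t i Q2 ->
  conv_types t i (fun E => s * Q1 E + (1 - s) * Q2 E).
Proof.
  intros Hs H1 H2.
  destruct (proj1 (conv_typesE i Q1) H1) as [c1 [Hc1 [Hs1 HQ1]]].
  destruct (proj1 (conv_typesE i Q2) H2) as [c2 [Hc2 [Hs2 HQ2]]].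
  apply conv_typesE. exists (scale_coefs s c1 ++ scale_coefs (1 - s) c2).
  unfold scale_coefs; rewrite lsum_app, !lsum_map; simpl. repeat split.
  - intros p Hp.
    apply in_app_or in Hp as [Hp|Hp]; apply in_map_iff in Hp as [q [<- Hq]]; simpl.
    + pose proof (Hc1 q Hq); nra.
    + pose proof (Hc2 q Hq); nra.
  - rewrite !lsum_scal, Hs1, Hs2. ring.
  - intros E. rewrite lsum_app, !lsum_map, HQ1, HQ2, <- !lsum_scal.
    f_equal; apply lsum_ext; intros; simpl; ring.
Qed.

Lemma simple_int_conv_lb i Q l a : conv_types t i Q ->
  (forall w, a <= simple_int (t i w) l) -> a <= simple_int Q l.
Proof.
  intros HQ Ha. destruct (proj1 (conv_typesE i Q) HQ) as [cl [Hc [Hsum HQE]]].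
  rewrite simple_int_lsum.
  rewrite (lsum_ext l _ (fun q => lsum cl (fun p => fst p * (fst q * t i (snd p) (snd q)))))
    by (intros q _; rewrite HQE, <- lsum_scal; apply lsum_ext; intros; ring).
  rewrite lsum_swap, <- (Rmult_1_r a), <- Hsum, <- lsum_scal.
  apply lsum_le; intros p Hp. rewrite lsum_scal, <- simple_int_lsum.
  pose proof (Hc p Hp); pose proof (Ha (snd p)). nra.
Qed.

(* For [l] uniformly [d]-close to [f], every type of [i], hence every element of the
   convex hull, gives [l] a value at least [-d]; one of them is close to [P] on the
   sets of [l]. *)
Lemma integral_nonneg_of_adherent i P f : pba A P -> adherent A (conv_types t i) P ->
  B_fun A f -> (forall w, 0 <= integral A (t i w) f) -> 0 <= integral A P f.
Proof.
  intros HP Hadh Hf Hnn. pose proof type_space_field as HA.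
  assert (Hlb : forall d, 0 < d -> - (3 * d) <= integral A P f).
  { intros d Hd. destruct (Hf d Hd) as [l [Hl Hdl]].
    assert (Hw : 0 < d / (weight l + 1))
      by (apply Rdiv_lt_0_compat; pose proof (weight_nonneg l); lra).
    destruct (Hadh (map snd l) (proj2 (Forall_map _ _ _) Hl) _ Hw) as [Q [HQ Hc]].
    pose proof (integral_spec A HA P HP f l d Hf Hl Hdl).
    pose proof (simple_int_closeF P Q l d Hd Hc).
    assert (- d <= simple_int Q l).
    { apply (simple_int_conv_lb i); auto. intros w.
      pose proof (integral_spec A HA (t i w) (types_pba i w) f l d Hf Hl Hdl).
      specialize (Hnn w). split_Rabs; lra. }
    split_Rabs; lra. }
  apply Rnot_lt_le; intros Hneg.
  assert (Hd : 0 < - integral A P f / 6) by lra.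
  specialize (Hlb _ Hd). lra.
Qed.

Lemma consistent_jointly_approximable : consistent A t ->
  forall I, jointly_approximable A (conv_types t) I.
Proof.
  intros Hc I F HF e He. destruct HT as [[j] _].
  destruct (Hc (j :: I)) as [P HP].
  assert (Happ : forall i, In i (j :: I) -> exists Q, conv_types t i Q /\
            forall E, In E F -> Rabs (integral A P (indicator E) - Q E) < e / 2).
  { intros i Hi. apply (wstar_closure_approx A type_space_field);
      [apply conv_types_pba|apply HP, Hi|exact HF|lra]. }
  destruct (Happ j (or_introl eq_refl)) as [Qj [HQj Hj]].
  exists Qj; split; [apply (conv_types_pba j), HQj|]. intros i Hi.
  destruct (Happ i (or_intror Hi)) as [Q [HQ Hi']]. exists Q; split; [exact HQ|].
  intros E HE. specialize (Hj E HE); specialize (Hi' E HE). split_Rabs; lra.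
Qed.

Lemma semi_bet_types_nonneg I f : semi_bet A t I f ->
  forall i w, In i I -> 0 <= integral A (t i w) (f i).
Proof. intros [_ [_ Hcc]] i w Hi. destruct (Hcc w) as [S [_ [Sw HS]]]. exact (HS w Sw i Hi). Qed.

Theorem consistent_no_money_pump : consistent A t -> ~ money_pump A t.
Proof.
  intros Hc Hmp.
  destruct (pba_adherent_all A type_space_field (conv_types t) (fun _ => True)
              (fun I _ => consistent_jointly_approximable Hc I)) as [P [HP Hadh]].
  destruct (Hmp P HP) as [I [f [Hbet Hneg]]].
  assert (HB : forall i, In i I -> B_fun A (f i)) by apply Hbet.
  change (integral A P (fun w => lsum I (fun i => f i w)) < 0) in Hneg.
  rewrite (integral_lsum A type_space_field P HP I f HB) in Hneg.
  enough (0 <= lsum I (fun i => integral A P (f i))) by lra.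
  apply lsum_nonneg; intros i Hi.
  apply (integral_nonneg_of_adherent i); auto.
  intros w; apply (semi_bet_types_nonneg I); auto.
Qed.

Lemma commonly_certain_everywhere I (G : @set Omega) w :
  (forall w', G w') -> commonly_certain A t I G w.
Proof.
  intros HG. exists setT. split; [split|split; [exact Logic.I|intros w' _; apply HG]].
  - exists w; exact Logic.I.
  - exists setT. split; [apply type_space_field|split; [auto|]].
    intros w' _ i _. destruct (types_pba i w') as [_ [_ H1]]. exact H1.
Qed.

Section Separation.
Variables (i0 : N) (I' : list N) (F : list (@set Omega)) (e : R).
Hypothesis HnD : NoDup (i0 :: I').
Hypothesis HF : Forall A F.
Hypothesis He : 0 < e.
Hypothesis Hfar : forall P, pba A P ->
  exists i, In i (i0 :: I') /\ ~ approx_by (conv_types t i) P F e.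

Definition type_profile (T : N -> @set Omega -> R) :=
  forall i, In i (i0 :: I') -> conv_types t i (T i).

Definition gap (T : N -> @set Omega -> R) (p : N * @set Omega) : R :=
  T (fst p) (snd p) - T i0 (snd p).

Lemma type_profile_bounds T i E : type_profile T -> In i (i0 :: I') -> In E F ->
  0 <= T i E <= 1.
Proof.
  intros HTp Hi HE. rewrite Forall_forall in HF.
  exact (pba_bounds A type_space_field _ (conv_types_pba i _ (HTp i Hi)) E (HF E HE)).
Qed.

Lemma type_profile_gap_far T : type_profile T ->
  e * e <= dot (list_prod I' F) (gap T) (gap T).
Proof.
  intros HTp. destruct (Hfar (T i0) (conv_types_pba i0 _ (HTp i0 (or_introl eq_refl))))
    as [i [Hi Hnear]].
  assert (Hnclose : ~ closeF (T i0) (T i) F e) by (intros Hc; apply Hnear; exists (T i); auto).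
  destruct (not_closeF _ _ _ _ Hnclose) as [E [HE Hle]].
  destruct Hi as [<-|Hi]; [rewrite Rminus_diag, Rabs_R0 in Hle; lra|].
  apply (Rle_trans _ (gap T (i, E) * gap T (i, E))).
  - unfold gap; simpl. rewrite Rabs_minus_sym in Hle. split_Rabs; nra.
  - apply (lsum_term_le _ (fun p => gap T p * gap T p)); [intros; nra|apply in_prod; auto].
Qed.

Lemma far_profiles_separated (w0 : Omega) : exists u, forall T, type_profile T ->
  e * e / 2 <= dot (list_prod I' F) u (gap T).
Proof.
  destruct (convex_separation (list_prod I' F) (fun u => exists T, type_profile T /\ u = gap T))
    with (e := e) as [u [[T1 [_ ->]] Hsep]]; auto.
  - exists (gap (fun i => t i w0)), (fun i => t i w0). split; auto.
    intros i _; apply conv_types_point.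
  - intros u v s [T1 [HT1 ->]] [T2 [HT2 ->]] Hs.
    exists (fun i E => s * T1 i E + (1 - s) * T2 i E). split.
    + intros i Hi; apply conv_types_comb; auto.
    + apply functional_extensionality; intros p; unfold gap; ring.
  - intros u [i E] [T [HTp ->]] Hp. apply in_prod_iff in Hp as [Hi HE].
    pose proof (type_profile_bounds T i E HTp (or_intror Hi) HE).
    pose proof (type_profile_bounds T i0 E HTp (or_introl eq_refl) HE).
    unfold gap; simpl. split_Rabs; lra.
  - intros u [T [HTp ->]]. apply type_profile_gap_far, HTp.
  - exists (gap T1); intros T HTp. apply Hsep. eauto.
Qed.

(* Player [i0] takes the opposite side of every bet of the others, so the bets cancel. *)
Definition bet_coef (u : N * @set Omega -> R) (i : N) (E : @set Omega) : R :=
  if excluded_middle_informative (i = i0) then - lsum I' (fun j => u (j, E)) else u (i, E).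

Lemma bet_coef_pairing u (x : N -> @set Omega -> R) :
  lsum (i0 :: I') (fun i => lsum F (fun E => bet_coef u i E * x i E)) =
  dot (list_prod I' F) u (fun p => x (fst p) (snd p) - x i0 (snd p)).
Proof.
  apply NoDup_cons_iff in HnD as [Hi0 _].
  unfold dot; rewrite lsum_list_prod; cbn [fst snd].
  change (lsum F (fun E => bet_coef u i0 E * x i0 E) +
          lsum I' (fun i => lsum F (fun E => bet_coef u i E * x i E)) =
          lsum I' (fun j => lsum F (fun E => u (j, E) * (x j E - x i0 E)))).
  rewrite (lsum_ext I' (fun i => lsum F (fun E => bet_coef u i E * x i E))
             (fun j => lsum F (fun E => u (j, E) * x j E))).
  2: { intros j Hj; apply lsum_ext; intros E _; unfold bet_coef.
       destruct (excluded_middle_informative (j = i0)) as [->|]; [contradiction|reflexivity]. }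
  rewrite (lsum_ext I' (fun j => lsum F (fun E => u (j, E) * (x j E - x i0 E)))
             (fun j => lsum F (fun E => u (j, E) * x j E) - lsum F (fun E => u (j, E) * x i0 E)))
    by (intros; rewrite <- lsum_sub; apply lsum_ext; intros; ring).
  rewrite lsum_sub, (lsum_swap I' F (fun j E => u (j, E) * x i0 E)).
  rewrite (lsum_ext F (fun E => bet_coef u i0 E * x i0 E)
             (fun E => -1 * lsum I' (fun j => u (j, E) * x i0 E))).
  - rewrite lsum_scal; ring.
  - intros E _; unfold bet_coef. destruct (excluded_middle_informative (i0 = i0)); [|congruence].
    replace (lsum I' (fun j => u (j, E) * x i0 E)) with (x i0 E * lsum I' (fun j => u (j, E)))
      by (rewrite <- lsum_scal; apply lsum_ext; intros; ring).
    ring.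
Qed.

Definition bet (u : N * @set Omega -> R) (a : N -> R) (i : N) : list (R * @set Omega) :=
  (- a i, setT) :: map (fun E => (bet_coef u i E, E)) F.

Lemma bet_in u a i : simple_in A (bet u a i).
Proof. constructor; [apply type_space_field|]. apply Forall_map, HF. Qed.

Lemma simple_int_bet (mu : @set Omega -> R) u a i : mu setT = 1 ->
  simple_int mu (bet u a i) = - a i + lsum F (fun E => bet_coef u i E * mu E).
Proof.
  intros H1. unfold bet. rewrite simple_int_cons, simple_int_lsum, lsum_map; simpl.
  rewrite H1. ring.
Qed.

Lemma simple_eval_bet u a i w :
  simple_eval (bet u a i) w = - a i + lsum F (fun E => bet_coef u i E * indicator E w).
Proof.
  unfold bet. rewrite simple_eval_cons, simple_eval_lsum, lsum_map, indicator_in by exact Logic.I.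
  simpl. ring.
Qed.

(* Each player's bet is shifted by the infimum of its value under his own types,
   making it acceptable to every type while keeping the total a negative constant. *)
Theorem semi_bet_of_far (w0 : Omega) : exists f c, semi_bet A t (i0 :: I') f /\ c < 0 /\
  forall w, lsum (i0 :: I') (fun i => f i w) = c.
Proof.
  pose proof type_space_field as HA.
  destruct (far_profiles_separated w0) as [u Hu].
  set (g := fun i w => lsum F (fun E => bet_coef u i E * t i w E)).
  destruct (lsum_inf_ge (i0 :: I') g (e * e / 2)) as [a [Ha Hsum]].
  - exact (inhabits w0).
  - intros i. exists (- lsum F (fun E => Rabs (bet_coef u i E))). intros w.
    replace (- lsum F (fun E => Rabs (bet_coef u i E)))
      with (lsum F (fun E => -1 * Rabs (bet_coef u i E))) by (rewrite lsum_scal; ring).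
    apply lsum_le; intros E HE. rewrite Forall_forall in HF.
    pose proof (pba_bounds A HA _ (types_pba i w) E (HF E HE)). split_Rabs; nra.
  - intros xs. unfold g. rewrite (bet_coef_pairing u (fun i E => t i (xs i) E)).
    apply (Hu (fun i E => t i (xs i) E)). intros i _; apply conv_types_point.
  - exists (fun i => simple_eval (bet u a i)), (- lsum (i0 :: I') a). split; [|split].
    + split; [exact HnD|split].
      * intros i _; apply B_fun_simple, bet_in.
      * intros w; apply commonly_certain_everywhere. intros w' i Hi.
        rewrite (integral_simple A HA (t i w') (types_pba i w') (bet u a i));
          [|apply bet_in|reflexivity].
        rewrite simple_int_bet by apply (types_pba i w').
        specialize (Ha i w'). unfold g in Ha. lra.
    + nra.
    + intros w.
      rewrite (lsum_ext _ _ (fun i => - a i + lsum F (fun E => bet_coef u i E * indicator E w)))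
        by (intros; apply simple_eval_bet).
      rewrite lsum_add, (bet_coef_pairing u (fun _ E => indicator E w)).
      unfold dot. rewrite (lsum_ext (list_prod I' F) _ (fun _ => 0)) by (intros; ring).
      rewrite lsum_const.
      replace (lsum (i0 :: I') (fun i => - a i)) with (-1 * lsum (i0 :: I') a)
        by (rewrite <- lsum_scal; apply lsum_ext; intros; ring).
      ring.
Qed.

End Separation.

Lemma money_pump_of_far I F e : NoDup I -> Forall A F -> 0 < e ->
  (forall P, pba A P -> exists i, In i I /\ ~ approx_by (conv_types t i) P F e) ->
  money_pump A t.
Proof.
  intros HnD HF He Hfar P0 HP0.
  destruct (pba_inhabited A type_space_field P0 HP0) as [w0].
  destruct I as [|i0 I']; [destruct (Hfar P0 HP0) as [i [[] _]]|].
  destruct (semi_bet_of_far i0 I' F e HnD HF He Hfar w0) as [f [c [Hbet [Hc Hsum]]]].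
  exists (i0 :: I'), f. split; [exact Hbet|].
  change (integral A P0 (fun w => lsum (i0 :: I') (fun i => f i w)) < 0).
  rewrite (integral_const A type_space_field P0 HP0 _ c Hsum). exact Hc.
Qed.

Theorem inconsistent_money_pump : ~ consistent A t -> money_pump A t.
Proof.
  intros Hnc. pose proof type_space_field as HA.
  destruct (not_all_ex_not _ _ Hnc) as [I0 HI0].
  set (I1 := nodup (fun i j : N => excluded_middle_informative (i = j)) I0).
  assert (Hnja : ~ jointly_approximable A (conv_types t) I1).
  { intros Hja. apply HI0.
    destruct (pba_adherent_all A HA (conv_types t) (fun i => In i I1)) as [P [HP Hadh]].
    - intros I HI F HF e He. destruct (Hja F HF e He) as [P [HP HPI]]. exists P; split; auto.
    - exists P. intros i Hi. apply wstar_closure_of_adherent; auto.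
      + apply conv_types_pba.
      + apply Hadh, nodup_In, Hi. }
  destruct (not_jointly_approximable A _ _ Hnja) as [F [e [HF [He Hfar]]]].
  exact (money_pump_of_far I1 F e (NoDup_nodup _ I0) HF He Hfar).
Qed.

End TypeSpaces.

Theorem theorem3 (N Omega : Type) (A : (Omega -> Prop) -> Prop)
  (M : N -> (Omega -> Prop) -> Prop) (t : N -> Omega -> (Omega -> Prop) -> R)
  (HT : type_space A M t) :
  (consistent A t \/ money_pump A t) /\ ~ (consistent A t /\ money_pump A t).
Proof.
  split.
  - destruct (classic (consistent A t)) as [Hc|Hnc]; [left; exact Hc|right].
    exact (inconsistent_money_pump N Omega A M t HT Hnc).
  - intros [Hc Hmp]. exact (consistent_no_money_pump N Omega A M t HT Hc Hmp).
Qed.
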